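(* Let $p\in\mathbb N$, let $H_1,\ldots,H_p$ be separable Hilbert spaces, let $I_i:H_{p+2-i}\to H_{p+1-i}$ ($i=2,\ldots,p$) be linear operators, and let $B_1,\ldots,B_p$ be linear (possibly unbounded) operators on $H_1$ with $Dom(B):=Dom(B_1)\cap\cdots\cap Dom(B_p)$ non-empty. Let $L$ be a zero-mean square-integrable $H_p$-valued Lévy process, $\delta>0$, $t_i=i\delta$, and assume the increments of $L$ lie in the domain of $I_p\cdots I_2$; set $\epsilon_i:=\delta^{-1}I_p\cdots I_2(L(t_{i+1})-L(t_i))$, $i=0,1,2,\ldots$. Let $\{x_i\}_{i\ge0}\subset H_1$ be defined by $$Q_p\!\left(\frac{\Delta_\delta}{\delta}\right)x_i=\epsilon_i,\qquad i=0,1,2,\ldots,$$ with given initial values $x_0,\ldots,x_{p-1}$, where $Q_p(\lambda)=\lambda^p-B_1\lambda^{p-1}-\cdots-B_{p-1}\lambda-B_p$, i.e. $\delta^{-p}\Delta_\delta^p x_i-\sum_{q=1}^p\delta^{-(p-q)}B_q\Delta_\delta^{p-q}x_i=\epsilon_i$. Assume that $B_1y_1+\cdots+B_py_p\in Dom(B)$ for all $y_1,\ldots,y_p\in Dom(B)$, that $\epsilon_i\in Dom(B)$ for all $i$, and that $x_0,\ldots,x_{p-1}\in Dom(B)$. Then $\{x_i\}_{i\ge0}$ is an AR$(p)$ process in $H_1$ with dynamics $$x_{i+p}=\sum_{q=1}^p\widetilde B_qx_{i+(p-q)}+\delta^p\epsilon_i,$$ where $$\widetilde B_q=(-1)^{q+1}\binom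 pq\mathrm{Id}+\sum_{k=1}^q\delta^kB_k(-1)^{q-k}\binom{p-k}{q-k},\qquad q=1,\ldots,p,$$ and $\mathrm{Id}$ is the identity on $H_1$.
   Context: $\Delta_\delta^n$ is the $n$th order forward difference acting on the sequence via $x_i=x(t_i)$: $\Delta_\delta^nx_i=\sum_{k=0}^n\binom nk(-1)^kx_{i+n-k}$, with $\Delta_\delta^0$ the identity. In the paper the operators $B_q$ arise from operators $A_q:H_{p+1-q}\to H_p$ of an operator matrix via $I_p\cdots I_2A_q=B_qI_pI_{p-1}\cdots I_{q+1}$ for $q=1,\ldots,p-1$ and $B_p:=I_p\cdots I_2A_p$, but only the operators $B_1,\ldots,B_p$ on $H_1$ enter the statement. *)

From mathcomp Require Import all_boot all_order all_algebra.
Set Implicit Arguments. Unset Strict Implicit. Unset Printing Implicit Defensive.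
Import Order.TTheory GRing.Theory Num.Theory.
Local Open Scope ring_scope.

Definition fdiff (R : ringType) (V : lmodType R) (n : nat) (x : nat -> V) (i : nat) : V :=
  \sum_(k < n.+1) (((-1) ^+ k * ('C(n, k))%:R) *: x (i + n - k)%N).

(* A (possibly unbounded) linear operator between R-vector spaces U and V:
   a map op defined (at least) on a linear subspace dom of U, linear on dom. *)
Definition linear_on (R : ringType) (U V : lmodType R) (dom : pred U) (op : U -> V) : Prop :=
  [/\ 0 \in dom,
      (forall a u v, u \in dom -> v \in dom -> a *: u + v \in dom) &
      (forall a u v, u \in dom -> v \in dom -> op (a *: u + v) = a *: op u + op v)].

Definition common_dom (R : ringType) (V : lmodType R) (p : nat) (D : nat -> pred V) (y : V) : Prop :=
  forall q, (1 <= q <= p)%N -> y \in D q.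

Definition Btilde (R : ringType) (V : lmodType R) (p : nat) (delta : R)
    (B : nat -> V -> V) (q : nat) (y : V) : V :=
  ((-1) ^+ q.+1 * ('C(p, q))%:R) *: y
  + \sum_(1 <= k < q.+1) ((delta ^+ k * (-1) ^+ (q - k) * ('C(p - k, q - k))%:R) *: B k y).

From mathcomp Require Import all_boot all_order all_algebra zify.
Set Implicit Arguments. Unset Strict Implicit. Unset Printing Implicit Defensive.
Import Order.TTheory GRing.Theory Num.Theory.
Local Open Scope ring_scope.

(* Multiplying the equation by delta^p gives
   Delta^p x_i = delta^p eps_i + sum_q delta^q B_q Delta^(p-q) x_i.
   Splitting off the term x_(i+p) of Delta^p x_i produces the Id part of the
   Btilde_q; expanding each B_q Delta^(p-q) x_i by linearity and regrouping the
   double sum by the lag of x produces the B_k part.  Linearity is only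
   available on Dom(B), but every x_n lies there, by induction on n: the same
   formula writes x_(i+p) as a combination of earlier terms, eps_i, and a sum
   B_1 y_1 + ... + B_p y_p with y_q in Dom(B). *)

Definition comb_closed (R : nzRingType) (V : lmodType R) (S : V -> Prop) : Prop :=
  S 0 /\ (forall a u v, S u -> S v -> S (a *: u + v)).

Definition linear_in (R : nzRingType) (V W : lmodType R) (S : V -> Prop)
    (f : V -> W) : Prop :=
  forall a u v, S u -> S v -> f (a *: u + v) = a *: f u + f v.

Section LinearIn.

Variables (R : nzRingType) (V W : lmodType R) (S : V -> Prop) (f : V -> W).
Hypotheses (S_closed : comb_closed S) (f_lin : linear_in S f).

Lemma comb_closedZ a u : S u -> S (a *: u).
Proof. by move=> Su; rewrite -[_ *: _]addr0; apply: S_closed.2 => //; apply: S_closed.1. Qed.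

Lemma comb_closedD u v : S u -> S v -> S (u + v).
Proof. by move=> Su Sv; rewrite -[u]scale1r; apply: S_closed.2. Qed.

Lemma comb_closed_sum (I : Type) (r : seq I) (P : pred I) (F : I -> V) :
  (forall i, P i -> S (F i)) -> S (\sum_(i <- r | P i) F i).
Proof. by move=> SF; apply: big_ind => //; [apply: S_closed.1 | apply: comb_closedD]. Qed.

Lemma linear_in0 : f 0 = 0.
Proof.
have S0 := S_closed.1; have := f_lin 1 S0 S0.
by rewrite !scale1r addr0 => h; apply: (addrI (f 0)); rewrite addr0 -h.
Qed.

Lemma linear_inD u v : S u -> S v -> f (u + v) = f u + f v.
Proof. by move=> Su Sv; rewrite -{1}[u]scale1r f_lin // scale1r. Qed.

Lemma linear_inZ a u : S u -> f (a *: u) = a *: f u.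
Proof.
by move=> Su; rewrite -[a *: u]addr0 f_lin //; [rewrite linear_in0 addr0 | apply: S_closed.1].
Qed.

Lemma linear_in_sum (I : Type) (r : seq I) (P : pred I) (F : I -> V) :
  (forall i, P i -> S (F i)) -> f (\sum_(i <- r | P i) F i) = \sum_(i <- r | P i) f (F i).
Proof.
move=> SF; pose K u w := S u /\ f u = w.
suff [] : K (\sum_(i <- r | P i) F i) (\sum_(i <- r | P i) f (F i)) by [].
apply: (big_ind2 K) => [|u1 w1 u2 w2 [S1 <-] [S2 <-]|i Pi].
- by split; [apply: S_closed.1 | apply: linear_in0].
- by split; [apply: comb_closedD | apply: linear_inD].
- by split=> //; apply: SF.
Qed.

End LinearIn.

Lemma linear_on_in (R : nzRingType) (V W : lmodType R) (dom : pred V) (f : V -> W)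
    (S : V -> Prop) :
  linear_on dom f -> (forall y, S y -> y \in dom) -> linear_in S f.
Proof. by case=> _ _ f_lin Sdom a u v Su Sv; apply: f_lin; apply: Sdom. Qed.

Lemma common_dom_closed (R : nzRingType) (V : lmodType R) (p : nat)
    (D : nat -> pred V) (B : nat -> V -> V) :
  (forall q, (1 <= q <= p)%N -> linear_on (D q) (B q)) -> comb_closed (common_dom p D).
Proof.
move=> B_lin; split=> [q qp | a u v Su Sv q qp]; case: (B_lin q qp) => // _ Dcomb _.
by apply: Dcomb; [apply: Su | apply: Sv].
Qed.

Lemma exchange_big_nat_triangle (W : zmodType) (n : nat) (F : nat -> nat -> W) :
  \sum_(1 <= q < n.+1) \sum_(1 <= k < q.+1) F k q
  = \sum_(1 <= k < n.+1) \sum_(k <= q < n.+1) F k q.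
Proof.
elim: n => [|n IH]; first by rewrite !big_geq.
have split_last k : (1 <= k < n.+2)%N ->
    \sum_(k <= q < n.+2) F k q = \sum_(k <= q < n.+1) F k q + F k n.+1.
  by case/andP=> _ kn; rewrite big_nat_recr.
rewrite big_nat_recr // IH (eq_big_nat _ _ split_last) big_split /=; congr (_ + _).
by rewrite [RHS]big_nat_recr //= [X in _ = _ + X]big_geq // addr0.
Qed.

Section ForwardDifference.

Variable R : nzRingType.

Lemma fdiffE (V : lmodType R) n (x : nat -> V) i :
  fdiff n x i = \sum_(k < n.+1) (((-1) ^+ k * ('C(n, k))%:R) *: x (i + (n - k))%N).
Proof. by apply: eq_bigr => k _; rewrite addnBA // -ltnS. Qed.

Lemma fdiff_lead_term (V : lmodType R) n (x : nat -> V) i :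
  fdiff n x i
  = x (i + n)%N - \sum_(1 <= q < n.+1) (((-1) ^+ q.+1 * ('C(n, q))%:R) *: x (i + (n - q))%N).
Proof.
rewrite fdiffE big_ord_recl /= expr0 mul1r bin0 scale1r subn0; congr (_ + _).
rewrite big_add1 /= big_mkord -sumrN; apply: eq_bigr => k _.
by rewrite [(-1) ^+ k.+2]exprS mulN1r mulNr scaleNr opprK.
Qed.

Lemma fdiff_mem (V : lmodType R) (S : V -> Prop) n (x : nat -> V) i :
  comb_closed S -> (forall j, (j <= n)%N -> S (x (i + j)%N)) -> S (fdiff n x i).
Proof.
move=> S_closed Sx; rewrite fdiffE; apply: comb_closed_sum => // k _.
by apply: comb_closedZ => //; apply: Sx; apply: leq_subr.
Qed.

Lemma fdiff_linear_in (V W : lmodType R) (S : V -> Prop) (f : V -> W) n (x : nat -> V) i :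
  comb_closed S -> linear_in S f -> (forall j, (j <= n)%N -> S (x (i + j)%N)) ->
  f (fdiff n x i) = fdiff n (fun j => f (x j)) i.
Proof.
move=> S_closed f_lin Sx; have Sxk k : S (x (i + (n - k))%N) by apply: Sx; apply: leq_subr.
rewrite fdiffE (linear_in_sum S_closed f_lin) => [|k _]; last exact: comb_closedZ.
by rewrite fdiffE; apply: eq_bigr => k _; rewrite (linear_inZ S_closed).
Qed.

Lemma sum_fdiff_exchange (V : lmodType R) (p i : nat) (c : nat -> R) (y : nat -> nat -> V) :
  \sum_(1 <= k < p.+1) c k *: fdiff (p - k) (y k) i
  = \sum_(1 <= q < p.+1) \sum_(1 <= k < q.+1)
      ((c k * (-1) ^+ (q - k) * ('C(p - k, q - k))%:R) *: y k (i + (p - q))%N).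
Proof.
rewrite exchange_big_nat_triangle; apply: eq_big_nat => k /andP[_ kp].
rewrite (big_addn 0 _ k) big_mkord subSn // fdiffE scaler_sumr.
by apply: eq_bigr => j _; rewrite scalerA mulrA addnK -subnDA (addnC k).
Qed.

End ForwardDifference.

Section ARDynamics.

Variables (R : fieldType) (V : lmodType R) (p : nat) (delta : R)
  (B : nat -> V -> V) (S : V -> Prop) (x eps : nat -> V).
Hypotheses (delta_neq0 : delta != 0) (S_closed : comb_closed S)
  (B_lin : forall q, (1 <= q <= p)%N -> linear_in S (B q))
  (B_sum_closed : forall y : nat -> V, (forall q, (1 <= q <= p)%N -> S (y q)) ->
     S (\sum_(1 <= q < p.+1) B q (y q)))
  (eps_mem : forall i, S (eps i)) (x_init : forall i, (i < p)%N -> S (x i))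
  (x_eq : forall i, delta ^- p *: fdiff p x i
     - \sum_(1 <= q < p.+1) (delta ^- (p - q) *: B q (fdiff (p - q) x i)) = eps i).

Lemma fdiff_scaled_eq i :
  fdiff p x i
  = delta ^+ p *: eps i + \sum_(1 <= q < p.+1) delta ^+ q *: B q (fdiff (p - q) x i).
Proof.
have deltaX_neq0 n : delta ^+ n != 0 by apply: expf_neq0.
rewrite -(x_eq i) scalerBr scalerA mulfV // scale1r scaler_sumr.
suff -> : \sum_(1 <= q < p.+1) delta ^+ p *: (delta ^- (p - q) *: B q (fdiff (p - q) x i))
        = \sum_(1 <= q < p.+1) delta ^+ q *: B q (fdiff (p - q) x i) by rewrite subrK.
apply: eq_big_nat => q /andP[_]; rewrite ltnS => qp; rewrite scalerA -{1}(subnK qp) exprD.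
by rewrite mulrAC mulfV ?mul1r.
Qed.

Lemma x_shift_eq i :
  x (i + p)%N
  = \sum_(1 <= q < p.+1) (((-1) ^+ q.+1 * ('C(p, q))%:R) *: x (i + (p - q))%N)
    + (delta ^+ p *: eps i + \sum_(1 <= q < p.+1) delta ^+ q *: B q (fdiff (p - q) x i)).
Proof. by rewrite -fdiff_scaled_eq fdiff_lead_term addrC subrK. Qed.

Lemma x_mem n : S (x n).
Proof.
elim/ltn_ind: n => n IH; case: (ltnP n p) => [/x_init // | pn].
rewrite -(subnK pn) x_shift_eq.
have Sfdiff q : (1 <= q <= p)%N -> S (fdiff (p - q) x (n - p)).
  by move=> qp; apply: fdiff_mem => // j jq; apply: IH; lia.
have BZ q : (1 <= q <= p)%N ->
    delta ^+ q *: B q (fdiff (p - q) x (n - p)) = B q (delta ^+ q *: fdiff (p - q) x (n - p)).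
  by move=> qp; rewrite (linear_inZ S_closed (B_lin qp) _ (Sfdiff q qp)).
apply: comb_closedD => //; [|apply: comb_closedD => //; first exact: comb_closedZ].
- rewrite big_nat_cond; apply: comb_closed_sum => // q /andP[qp _].
  by apply: comb_closedZ => //; apply: IH; lia.
- under eq_big_nat => q qp do rewrite BZ //.
  by apply: B_sum_closed => q qp; apply: comb_closedZ => //; apply: Sfdiff.
Qed.

Lemma x_AR i :
  x (i + p)%N
  = \sum_(1 <= q < p.+1) Btilde p delta B q (x (i + (p - q))%N) + delta ^+ p *: eps i.
Proof.
rewrite x_shift_eq /Btilde big_split /=.
rewrite -(sum_fdiff_exchange _ _ (fun k => delta ^+ k) (fun k j => B k (x j))).
have B_fdiff q : (1 <= q <= p)%N ->
    B q (fdiff (p - q) x i) = fdiff (p - q) (fun j => B q (x j)) i.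
  by move=> qp; apply: (fdiff_linear_in S_closed (B_lin qp)) => j _; apply: x_mem.
under [X in _ + (_ + X) = _]eq_big_nat => q qp do rewrite B_fdiff //.
by rewrite addrCA addrC.
Qed.

End ARDynamics.

Theorem proposition6 (R : realFieldType) (p : nat)
    (H1 Hp : lmodType R)
    (* J stands for the composite I_p ... I_2 : H_p -> H_1, with domain DJ *)
    (J : Hp -> H1) (DJ : pred Hp)
    (B : nat -> H1 -> H1) (D : nat -> pred H1)
    (L : R -> Hp) (delta : R) (x : nat -> H1) :
  linear_on DJ J ->
  (forall q, (1 <= q <= p)%N -> linear_on (D q) (B q)) ->
  (exists y, common_dom p D y) ->
  0 < delta ->
  (* increments of L lie in the domain of I_p ... I_2 *)
  (forall i : nat, L (i.+1%:R * delta) - L (i%:R * delta) \in DJ) ->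
  let eps := fun i : nat => delta^-1 *: J (L (i.+1%:R * delta) - L (i%:R * delta)) in
  (* B_1 y_1 + ... + B_p y_p in Dom(B) for y_1,...,y_p in Dom(B) *)
  (forall y : nat -> H1, (forall q, (1 <= q <= p)%N -> common_dom p D (y q)) ->
      common_dom p D (\sum_(1 <= q < p.+1) B q (y q))) ->
  (forall i, common_dom p D (eps i)) ->
  (forall i, (i < p)%N -> common_dom p D (x i)) ->
  (* Q_p(Delta_delta / delta) x_i = eps_i *)
  (forall i, delta ^- p *: fdiff p x i
             - \sum_(1 <= q < p.+1) (delta ^- (p - q) *: B q (fdiff (p - q) x i))
             = eps i) ->
  forall i, x (i + p)%N
            = \sum_(1 <= q < p.+1) Btilde p delta B q (x (i + (p - q))%N)
              + delta ^+ p *: eps i.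
Proof.
(* The noise enters only through eps i \in Dom(B). *)
move=> _ B_lin _ delta_gt0 _ eps B_sum_closed eps_mem x_init x_eq i.
apply: (x_AR (lt0r_neq0 delta_gt0) (common_dom_closed B_lin)) => // q qp.
by apply: (linear_on_in (B_lin q qp)) => y; apply.
Qed.
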